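(* Consider the Public WOM model described in the context. Every solution $(p_2^*,\underline{k}^* )$ of the seller's problem $$\max_{p_2\in[0,1],\ \underline{k}}\ \pi(p_2,\underline{k})=(1-\beta)+\beta\left(p_2-\frac{c}{\underline{k}\,\phi(L(\underline{k}),p_2)}\right)(1-p_2)\,\Gamma(L(\underline{k}))$$ satisfies $p_2^*=1/2$, the corresponding bonus is $b=\dfrac{c}{\underline{k}^*\,\phi(L(\underline{k}^* ),p_2^* )}$, and $$\underline{k}^*\in\arg\max_{\underline{k}}\left[\frac{\Gamma(L(\underline{k}))}{4}-\frac{c\,\Gamma(L(\underline{k}))}{2\,\underline{k}\,\phi(L(\underline{k}),1/2)}\right].$$
   Context: A seller (zero marginal cost) faces a unit mass of consumers, each demanding at most one unit. A fraction $1-\beta\in(0,1)$ is informed about the product and has reservation value $1$ (they are charged price $p_1=1$); the fraction $\beta$ is uninformed, with reservation value $v\sim U[0,1]$, and is charged price $p_2$, so an informed-by-referral consumer buys with probability $1-p_2$. Informed consumers are linked to uninformed ones by a directed bipartite network: out-degrees of informed consumers follow a probability distribution $f$ on the positive integers, in-degrees of uninformed consumers follow a distribution $g$, with $(1-\beta)\sum_k k f(k)=\beta\sum_k k g(k)$. If a fraction $L\in[0,1]$ of links carries information, the fraction of uninformed consumers who receive it is $\Gamma(L)=1-\sum_{k} g(k)(1-L)^k$, and the expected value, per unit of bonus, that an informed consumer gets from passing information along one link is $\phi(L,p_2)=(1-p_2)\sum_k g(k)\frac{1-(1-L)^k}{kL}$. The seller pays a bonus $b$ per successful referral. Public WOM: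 an informed consumer with out-degree $k$ can inform all her out-neighbours at a lump-sum cost $c>0$, and does so iff $k\,b\,\phi(L,p_2)\ge c$; hence there is a degree cutoff $\underline{k}$, the fraction of active links is $L(\underline{k})=\sum_{k\ge\underline{k}}f(k)$, and the bonus implementing cutoff $\underline{k}$ is $b=c/(\underline{k}\,\phi(L(\underline{k}),p_2))$, so the seller's problem reduces to choosing $(p_2,\underline{k})$ as in the claim. *)

From Stdlib Require Import Reals Lra.
From Coquelicot Require Import Coquelicot.
Open Scope R_scope.

(* A probability distribution on the positive integers, as d : nat -> R
   with d 0 = 0, nonnegative, summing to 1. *)
Definition posint_distr (d : nat -> R) : Prop :=
  d O = 0 /\ (forall k, 0 <= d k) /\ is_series d 1.

Definition has_mean (d : nat -> R) (m : R) : Prop :=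
  is_series (fun k => INR k * d k) m.

(* Fraction of active links for degree cutoff kc: L(kc) = sum_{k >= kc} f(k). *)
Definition Lcut (f : nat -> R) (kc : nat) : R :=
  Series (fun n => f (n + kc)%nat).

Definition Gamma (g : nat -> R) (L : R) : R :=
  1 - Series (fun k => g k * (1 - L) ^ k).

Definition phi (g : nat -> R) (L p2 : R) : R :=
  (1 - p2) * Series (fun k => g k * ((1 - (1 - L) ^ k) / (INR k * L))).

Definition bonus (f g : nat -> R) (c p2 : R) (kc : nat) : R :=
  c / (INR kc * phi g (Lcut f kc) p2).

Definition profit (f g : nat -> R) (beta c p2 : R) (kc : nat) : R :=
  (1 - beta) + beta * (p2 - bonus f g c p2 kc) * (1 - p2) * Gamma g (Lcut f kc).

(* Feasible choices: p2 in [0,1], cutoff a positive integer, and the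
   implementing bonus well defined (phi > 0). *)
Definition feasible (f g : nat -> R) (p2 : R) (kc : nat) : Prop :=
  0 <= p2 <= 1 /\ (1 <= kc)%nat /\ 0 < phi g (Lcut f kc) p2.

Definition kobj (f g : nat -> R) (c : R) (kc : nat) : R :=
  Gamma g (Lcut f kc) / 4
  - c * Gamma g (Lcut f kc) / (2 * INR kc * phi g (Lcut f kc) (1/2)).

(* For a fixed cutoff, [phi] is proportional to [1 - p2], so the expected bonus
   cost per reached consumer, [bonus * (1 - p2)], does not depend on the price.
   The profit is then [1 - beta + beta * Gamma * (p2 * (1 - p2) - const)], a
   parabola in [p2] with its maximum at [1/2], strictly because
   [Gamma L >= L > 0] (the cutoff must activate some links, otherwise [phi]
   vanishes). At [p2 = 1/2] the profit is an increasing affine function of the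
   reduced objective [kobj]. *)
From Stdlib Require Import Reals Lra Lia.
From Coquelicot Require Import Coquelicot.
Open Scope R_scope.

Lemma Series_nonneg (h : nat -> R) :
  (forall n, 0 <= h n) -> ex_series h -> 0 <= Series h.
Proof.
  intros Hh Eh.
  rewrite <- (Rmult_0_l (Series h)), <- Series_scal_l.
  apply Series_le; [|exact Eh].
  intros n; specialize (Hh n); lra.
Qed.

Lemma posint_distr_Series (d : nat -> R) :
  posint_distr d -> ex_series d /\ Series d = 1.
Proof.
  intros [_ [_ Hd]]; split; [exists 1; exact Hd | exact (is_series_unique _ _ Hd)].
Qed.

Lemma Lcut_bounds (f : nat -> R) (kc : nat) :
  posint_distr f -> 0 <= Lcut f kc <= 1.
Proof.
  intros Hf; pose proof Hf as [_ [Hpos _]].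
  destruct (posint_distr_Series f Hf) as [Ef Sf].
  unfold Lcut; destruct kc as [|k].
  - rewrite (Series_ext _ f) by (intros; f_equal; lia); lra.
  - rewrite (Series_ext _ (fun n => f (S k + n)%nat)) by (intros; f_equal; lia).
    pose proof (Series_incr_n f (S k) ltac:(lia) Ef) as Hsplit.
    assert (0 <= sum_f_R0 f k) by (apply cond_pos_sum; exact Hpos).
    assert (0 <= Series (fun n => f (S k + n)%nat)).
    { apply Series_nonneg; [intros; apply Hpos | apply ex_series_incr_n; exact Ef]. }
    simpl pred in Hsplit; lra.
Qed.

(* Since [g 0 = 0], every term satisfies [g k * (1 - L) ^ k <= g k * (1 - L)]. *)
Lemma Gamma_ge (g : nat -> R) (L : R) :
  posint_distr g -> 0 <= L <= 1 -> L <= Gamma g L.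
Proof.
  intros Hg HL; pose proof Hg as [Hg0 [Hpos _]].
  destruct (posint_distr_Series g Hg) as [Eg Sg].
  assert (Hterm : forall k, 0 <= g k * (1 - L) ^ k <= (1 - L) * g k).
  { intros [|k]; [rewrite Hg0; lra|].
    pose proof (Hpos (S k)).
    assert (0 <= (1 - L) ^ k <= 1).
    { split; [apply pow_le; lra|]. rewrite <- (pow1 k) at 2; apply pow_incr; lra. }
    assert (0 <= g (S k) * (1 - L)) by (apply Rmult_le_pos; lra).
    simpl; split; nra. }
  pose proof (Series_le _ _ Hterm (ex_series_scal_l _ _ Eg)) as Hle.
  rewrite Series_scal_l, Sg in Hle.
  unfold Gamma; lra.
Qed.

Lemma phi_price (g : nat -> R) (L p2 : R) : phi g L p2 = (1 - p2) * phi g L 0.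
Proof. unfold phi; ring. Qed.

(* A junk value: [(1 - (1 - 0) ^ k) / (INR k * 0)] is [0 / 0 = 0]. *)
Lemma phi_no_links (g : nat -> R) (p2 : R) : phi g 0 p2 = 0.
Proof.
  unfold phi.
  rewrite (Series_ext _ (fun n => 0 * 0)); [rewrite Series_scal_l; ring|].
  intros k; unfold Rdiv; rewrite Rmult_0_r, Rinv_0; ring.
Qed.

(* No hypotheses needed: the inverses only occur as atoms, and [Rinv_mult] is
   unconditional. *)
Lemma profit_half (f g : nat -> R) (beta c : R) (kc : nat) :
  profit f g beta c (1/2) kc = (1 - beta) + beta * kobj f g c kc.
Proof.
  unfold profit, bonus, kobj, Rdiv.
  rewrite !Rinv_mult.
  set (inv_kc := / INR kc); set (inv_phi := / phi _ _ _).
  field.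
Qed.

Section Feasible.

Variables (f g : nat -> R).
Hypotheses (Hf : posint_distr f) (Hg : posint_distr g).
Variables (p2 : R) (kc : nat).
Hypothesis Hfeas : feasible f g p2 kc.

Lemma feasible_price_lt1 : p2 < 1.
Proof.
  destruct Hfeas as [[_ Hp1] [_ Hphi]].
  destruct (Req_dec p2 1) as [->|]; [|lra].
  rewrite phi_price, Rminus_diag, Rmult_0_l in Hphi; lra.
Qed.

Lemma feasible_phi0_pos : 0 < phi g (Lcut f kc) 0.
Proof.
  destruct Hfeas as [_ [_ Hphi]].
  rewrite phi_price in Hphi; pose proof feasible_price_lt1; nra.
Qed.

Lemma feasible_Gamma_pos : 0 < Gamma g (Lcut f kc).
Proof.
  pose proof (Lcut_bounds f kc Hf) as HL.
  assert (Lcut f kc <> 0).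
  { intros HL0; pose proof feasible_phi0_pos as Hphi.
    rewrite HL0, phi_no_links in Hphi; lra. }
  pose proof (Gamma_ge g (Lcut f kc) Hg HL); lra.
Qed.

Lemma feasible_half : feasible f g (1/2) kc.
Proof.
  destruct Hfeas as [_ [Hk _]].
  split; [lra|]; split; [exact Hk|].
  rewrite phi_price; pose proof feasible_phi0_pos; lra.
Qed.

Lemma profit_half_sub (beta c : R) :
  profit f g beta c (1/2) kc - profit f g beta c p2 kc
  = beta * Gamma g (Lcut f kc) * (p2 - 1/2) ^ 2.
Proof.
  destruct Hfeas as [_ [Hk _]].
  assert (INR kc <> 0) by (apply not_0_INR; lia).
  pose proof feasible_price_lt1; pose proof feasible_phi0_pos.
  unfold profit, bonus; rewrite !(phi_price g _ (_ / _)), (phi_price g _ p2).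
  field; repeat split; lra.
Qed.

End Feasible.

Theorem proposition1 :
  forall (beta c : R) (f g : nat -> R) (mf mg : R),
    0 < beta < 1 -> 0 < c ->
    posint_distr f -> posint_distr g ->
    has_mean f mf -> has_mean g mg ->
    (1 - beta) * mf = beta * mg ->
    forall (p2s : R) (ks : nat),
      feasible f g p2s ks ->
      (forall (p2 : R) (kc : nat), feasible f g p2 kc ->
         profit f g beta c p2 kc <= profit f g beta c p2s ks) ->
      p2s = 1/2
      /\ bonus f g c p2s ks = c / (INR ks * phi g (Lcut f ks) (1/2))
      /\ feasible f g (1/2) ks
      /\ (forall kc : nat, feasible f g (1/2) kc -> kobj f g c kc <= kobj f g c ks).
Proof.
  intros beta c f g mf mg Hbeta _ Hf Hg _ _ _ p2s ks Hfeas Hopt.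
  pose proof (feasible_half f g p2s ks Hfeas) as Hhalf.
  assert (Hprice : p2s = 1/2).
  { pose proof (Hopt _ _ Hhalf) as Hle.
    pose proof (profit_half_sub f g p2s ks Hfeas beta c) as Hsub.
    pose proof (feasible_Gamma_pos f g Hf Hg p2s ks Hfeas) as HG.
    assert (Hsq : beta * Gamma g (Lcut f ks) * (p2s - 1/2) ^ 2 <= 0) by lra.
    assert (0 < beta * Gamma g (Lcut f ks)) by (apply Rmult_lt_0_compat; lra).
    assert ((p2s - 1/2) ^ 2 <= 0) by (apply (Rmult_le_reg_l (beta * Gamma g (Lcut f ks))); lra).
    nra. }
  subst p2s.
  split; [reflexivity|]; split; [reflexivity|]; split; [exact Hhalf|].
  intros kc Hkc.
  pose proof (Hopt _ _ Hkc) as Hle.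
  rewrite !profit_half in Hle.
  apply (Rmult_le_reg_l beta); lra.
Qed.
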